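(* There exists an absolute constant $C>0$ such that every finite simple graph $G$ with $n$ vertices and at least one edge satisfies \[ \Gamma(G) \leq C\,\lambda_1(G)\left(\frac{n}{\lambda_1(G)}\right)^{1/3}, \] where $\lambda_1(G)$ is the largest eigenvalue of the adjacency matrix of $G$ and $\Gamma(G)$ is the Grundy number of $G$.
   Context: Given an ordering $(x_1,\dots,x_n)$ of $V(G)$, the first-fit coloring algorithm colors $x_i$ with the smallest positive integer not used on the neighbors of $x_i$ among $x_1,\dots,x_{i-1}$. The Grundy number $\Gamma(G)$ is the largest number of colors used by the first-fit algorithm over all vertex orderings. *)

From HB Require Import structures.
From mathcomp Require Import all_boot all_order all_algebra perm.
From mathcomp Require Import reals Rstruct exp.
Notation R := Rdefinitions.R.
Set Implicit Arguments. Unset Strict Implicit. Unset Printing Implicit Defensive.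
Import Order.TTheory GRing.Theory Num.Theory.

Definition simple_graph (n : nat) (e : rel 'I_n) : Prop :=
  symmetric e /\ irreflexive e.

(* Smallest positive integer not in [used]; it lies in 1 .. size used + 1. *)
Definition first_free (used : seq nat) : nat :=
  head 0%N [seq k <- iota 1 (size used).+1 | k \notin used].

(* First-fit along an ordering.  [c] is the colouring so far (only vertices in
   [pre], the already processed ones, are meaningful); the next vertex x gets
   the smallest positive colour not used on its neighbours among [pre]. *)
Fixpoint first_fit_aux (n : nat) (e : rel 'I_n) (c : 'I_n -> nat)
    (pre : seq 'I_n) (s : seq 'I_n) : 'I_n -> nat :=
  match s with
  | [::] => c
  | x :: s' =>
      let k := first_free [seq c y | y <- pre & e x y] in
      first_fit_aux e (fun z => if z == x then k else c z) (rcons pre x) s'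
  end.

Definition first_fit (n : nat) (e : rel 'I_n) (s : seq 'I_n) : 'I_n -> nat :=
  first_fit_aux e (fun _ => 0%N) [::] s.

Definition ff_num_colors (n : nat) (e : rel 'I_n) (s : seq 'I_n) : nat :=
  size (undup [seq first_fit e s x | x <- s]).

Definition grundy (n : nat) (e : rel 'I_n) : nat :=
  \max_(p : 'S_n) ff_num_colors e [seq p i | i <- enum 'I_n].

Definition adjmx (n : nat) (e : rel 'I_n) : 'M[R]_n :=
  \matrix_(i, j) (e i j)%:R%R.

Definition largest_eigenvalue (n : nat) (A : 'M[R]_n) (lam : R) : Prop :=
  eigenvalue A lam /\ (forall mu : R, eigenvalue A mu -> mu <= lam)%R.

From HB Require Import structures.
From mathcomp Require Import all_boot all_order all_algebra perm.
From mathcomp Require Import reals Rstruct exp.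
From mathcomp Require Import sesquilinear spectral complex.
From mathcomp Require Import zify ring lra.
Set Implicit Arguments.
Unset Strict Implicit.
Unset Printing Implicit Defensive.

(* First-fit gives every vertex v a colour at most deg v + 1, and the k colours
   used along an ordering are carried by k distinct vertices, so k^3 is at most
   27 sum_v deg(v)^2 + 8.  On the spectral side, the Rayleigh bound
   x A x^T <= lambda |x|^2 applied to x = 4 lambda 1 + d, with d the degree
   vector, gives sum_v deg(v)^2 <= 16 n lambda^2: the form is at least
   4 lambda sum_v deg(v)^2, while |x|^2 <= 2 (16 n lambda^2 + sum_v deg(v)^2).
   Hence Gamma^3 <= 560 n lambda^2 <= (9 lambda (n / lambda)^(1/3))^3. *)

Lemma leq_sum_undup (T : eqType) (t : seq T) (h : T -> nat) :
  \sum_(c <- undup t) h c <= \sum_(c <- t) h c.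
Proof. by apply: sub_le_big_seq => // [? ?|c]; [exact: leq_addr | exact: count_undup]. Qed.

Lemma leq_nth_sorted_ltn (t : seq nat) j :
  sorted ltn t -> j < size t -> j <= nth 0 t j.
Proof.
have lt_nth_path b s : path ltn b s -> forall j, j < size s -> b + j < nth 0 s j.
  elim: s b => [|a s IHs] b //= /andP[lt_ba path_s] [|k] /=; first by rewrite addn0.
  by move=> /(IHs a path_s); lia.
case: t => [|a t] //= path_t; case: j => [|j] //= /(lt_nth_path a t path_t); lia.
Qed.

Lemma leq_sum_ord_uniq (u : seq nat) (h : nat -> nat) :
  {homo h : a b / a <= b} -> uniq u -> \sum_(j < size u) h j <= \sum_(c <- u) h c.
Proof.
move=> h_mono u_uniq.
rewrite -(perm_big _ (permEl (perm_sort leq u))) /= (big_nth 0) -(size_sort leq u).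
rewrite big_mkord; apply: leq_sum => j _; apply/h_mono/leq_nth_sorted_ltn => //.
by rewrite ltn_sorted_uniq_leq sort_uniq u_uniq sort_sorted //; exact: leq_total.
Qed.

Lemma cube_le_sum_sqr k : k ^ 3 <= 27 * \sum_(j < k) j.-1 ^ 2 + 8.
Proof.
elim: k => [|k IHk] //; rewrite big_ord_recr /=.
case: k IHk => [|[|k]] IHk /=; rewrite mulnDr; move: IHk;
  set S := \sum_(j < _) _; rewrite !expnS !expn0 !muln1; nia.
Qed.

Lemma first_free_le used : first_free used <= (size used).+1.
Proof.
rewrite /first_free; set l := filter _ _.
have : {subset l <= iota 1 (size used).+1} by move=> k; rewrite mem_filter => /andP[].
by case: l => [|a l] // /(_ a (mem_head _ _)); rewrite mem_iota /=; lia.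
Qed.

Section FirstFit.
Variables (n : nat) (e : rel 'I_n).

Definition deg (x : 'I_n) := #|e x|.

Lemma first_fit_aux_notin c pre s x :
  x \notin s -> first_fit_aux e c pre s x = c x.
Proof.
elim: s c pre => [|y s IHs] c pre //=; rewrite in_cons negb_or => /andP[xy xs].
by rewrite IHs // (negPf xy).
Qed.

Lemma first_fit_aux_le_deg c pre s x : uniq (pre ++ s) -> x \in s ->
  first_fit_aux e c pre s x <= (deg x).+1.
Proof.
elim: s c pre => [|y s IHs] c pre //= pre_s_uniq.
rewrite in_cons => /orP[/eqP-> | xs]; last by apply: IHs; rewrite ?cat_rcons.
move: pre_s_uniq; rewrite cat_uniq => /and3P[pre_uniq _ /andP[ys _]].
rewrite first_fit_aux_notin // eqxx; apply: leq_trans (first_free_le _) _.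
rewrite size_map ltnS /deg cardE; apply: uniq_leq_size; first exact: filter_uniq.
by move=> z; rewrite mem_filter mem_enum => /andP[].
Qed.

Lemma ff_num_colors_cube_le (p : 'S_n) :
  ff_num_colors e [seq p i | i <- enum 'I_n] ^ 3 <= 27 * \sum_v deg v ^ 2 + 8.
Proof.
set s := [seq p i | i <- enum 'I_n]; set f := first_fit e s.
have s_uniq : uniq s by rewrite map_inj_uniq ?enum_uniq //; exact: perm_inj.
have f_le v : f v <= (deg v).+1.
  apply: first_fit_aux_le_deg => //; apply/mapP; exists (p^-1 v)%g.
    by rewrite mem_enum.
  by rewrite permKV.
apply: leq_trans (cube_le_sum_sqr _) _; rewrite leq_add2r leq_mul2l /=.
have sqr_mono : {homo (fun c => c.-1 ^ 2) : a b / a <= b}.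
  by move=> a b ab; rewrite leq_exp2r //; lia.
apply: leq_trans (leq_sum_ord_uniq sqr_mono (undup_uniq _)) _.
apply: leq_trans (leq_sum_undup _ _) _.
rewrite big_map /s big_map big_enum [X in _ <= X](reindex_inj (@perm_inj _ p)) /=.
by apply: leq_sum => v _; rewrite leq_exp2r // -subn1 leq_subLR add1n f_le.
Qed.

Lemma grundy_cube_le : grundy e ^ 3 <= 27 * \sum_v deg v ^ 2 + 8.
Proof.
rewrite /grundy (bigmax_eq_arg (1%g : 'S_n)) //; exact: ff_num_colors_cube_le.
Qed.

End FirstFit.

Import Order.TTheory GRing.Theory Num.Theory.
Local Open Scope ring_scope.
Local Open Scope sesquilinear_scope.

Lemma eigenvalue_spectral_diag {C : numClosedFieldType} n (A : 'M[C]_n) i :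
  A \is normalmx -> eigenvalue A (spectral_diag A 0 i).
Proof.
move=> /orthomx_spectralP AE.
set P := spectralmx A in AE *; set D := spectral_diag A in AE *.
have Punit : P \in unitmx by apply: spectral_unit.
apply/eigenvalueP; exists (row i P).
  rewrite -row_mul AE !mulmxA mulmxV // mul1mx mul_diag_mx.
  by apply/rowP => j; rewrite !mxE.
apply/eqP => /(congr1 (mulmx^~ (invmx P))); rewrite -row_mul mulmxV // mul0mx.
by move/rowP/(_ i); rewrite !mxE eqxx => /eqP; rewrite oner_eq0.
Qed.

Lemma normalmx_form_le {C : numClosedFieldType} n (A : 'M[C]_n) (lam : C) :
  A \is normalmx -> (forall i, spectral_diag A 0 i <= lam) ->
  forall x : 'rV_n, (x *m A *m x ^t*) 0 0 <= lam * (x *m x ^t*) 0 0.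
Proof.
move=> /orthomx_spectralP AE le_lam x.
set P := spectralmx A in AE; set D := spectral_diag A in AE le_lam.
have PV : invmx P = P ^t* by apply/invmx_unitary/spectral_unitarymx.
set y := x *m P ^t*.
have Py : P *m x ^t* = y ^t* by rewrite trmx_mul map_mxM trmxCK.
have xAx : x *m A *m x ^t* = y *m diag_mx D *m y ^t*.
  by rewrite AE PV -Py !mulmxA.
have xx : x *m x ^t* = y *m y ^t*.
  by rewrite -Py /y !mulmxA -(mulmxA x) -PV mulVmx ?mulmx1 ?spectral_unit.
rewrite xAx xx mul_mx_diag !mxE mulr_sumr; apply: ler_sum => j _; rewrite !mxE.
by rewrite mulrAC [X in _ <= X]mulrC ler_wpM2l ?mul_conjC_ge0.
Qed.

Section RealSymmetric.
Variable F : rcfType.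
Local Notation toC := (real_complex F).

Lemma symmetric_form_le n (A : 'M[F]_n) (lam : F) :
  A^T = A -> (forall mu, eigenvalue A mu -> mu <= lam) ->
  forall x : 'rV_n, (x *m A *m x^T) 0 0 <= lam * (x *m x^T) 0 0.
Proof.
move=> Asym le_lam x.
have conj_toC m p (B : 'M[F]_(m, p)) : map_mx Num.conj (map_mx toC B) = map_mx toC B.
  by apply/matrixP => i j; rewrite !mxE; apply/conj_Creal; rewrite complex_real.
have Aherm : map_mx toC A \is hermsymmx.
  by apply/is_hermitianmxP; rewrite expr0 scale1r -[in LHS]Asym map_trmx conj_toC.
have D_le i : spectral_diag (map_mx toC A) 0 i <= toC lam.
  set d := spectral_diag _ 0 i.
  have d_real : d \is Num.real.
    by move/mxOverP: (hermitian_spectral_diag_real Aherm); apply.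
  have := eigenvalue_spectral_diag i (hermitian_normalmx Aherm).
  by rewrite -/d -(RRe_real d_real) lecR eigenvalue_map => /le_lam.
set xc := map_mx toC x.
have xcT : xc ^t* = map_mx toC x^T by rewrite map_trmx conj_toC.
have := normalmx_form_le (hermitian_normalmx Aherm) D_le xc.
rewrite xcT /xc -!(map_mxM toC) [X in X <= _]mxE [X in _ * X]mxE.
by rewrite -(rmorphM toC) lecR.
Qed.

Lemma symmetric_sum_form_le n (A : 'M[F]_n) (lam : F) (x : 'I_n -> F) :
  A^T = A -> (forall mu, eigenvalue A mu -> mu <= lam) ->
  \sum_i \sum_j x i * A i j * x j <= lam * \sum_i x i ^+ 2.
Proof.
move=> Asym le_lam; set u := \row_i x i.
have -> : \sum_i \sum_j x i * A i j * x j = (u *m A *m u^T) 0 0.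
  rewrite mxE exchange_big; apply: eq_bigr => j _; rewrite !mxE big_distrl.
  by apply: eq_bigr => i _; rewrite !mxE.
have -> : \sum_i x i ^+ 2 = (u *m u^T) 0 0.
  by rewrite mxE; apply: eq_bigr => i _; rewrite !mxE expr2.
exact: symmetric_form_le.
Qed.
End RealSymmetric.

Section NonnegativeSymmetric.
Variables (F : rcfType) (n : nat) (A : 'M[F]_n) (lam : F).
Hypotheses (A_sym : A^T = A) (lam_max : forall mu, eigenvalue A mu -> mu <= lam).

Lemma sum_entries_le : \sum_i \sum_j A i j <= lam * n%:R.
Proof.
have := symmetric_sum_form_le (fun=> 1) A_sym lam_max.
under eq_bigr do under eq_bigr do rewrite mulr1 mul1r.
by rewrite exchange_big /= expr1n sumr_const card_ord.
Qed.

Hypothesis A_ge0 : forall i j, 0 <= A i j.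

Lemma sum_row_sums_sqr_le :
  0 < lam -> \sum_i (\sum_j A i j) ^+ 2 <= 16%:R * n%:R * lam ^+ 2.
Proof.
move=> lam_gt0; set r := fun i => \sum_j A i j; rewrite -/(\sum_i r i ^+ 2).
have r_ge0 i : 0 <= r i by apply: sumr_ge0 => j _.
set s := 4%:R * lam; have s_ge0 : 0 <= s by rewrite /s; lra.
have lower : s * \sum_i r i ^+ 2 <= \sum_i \sum_j (s + r i) * A i j * (s + r j).
  rewrite mulr_sumr; apply: ler_sum => i _.
  rewrite expr2 mulrA {2}/r mulr_sumr; apply: ler_sum => j _.
  rewrite [X in _ <= X]mulrAC ler_wpM2r //.
  by have := r_ge0 i; have := r_ge0 j; nra.
have upper : \sum_i (s + r i) ^+ 2 <= \sum_i (2%:R * s ^+ 2 + 2%:R * r i ^+ 2).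
  by apply: ler_sum => i _; have := sqr_ge0 (s - r i); nra.
rewrite big_split sumr_const card_ord -mulr_sumr /= in upper.
have := le_trans lower (symmetric_sum_form_le (fun i => s + r i) A_sym lam_max).
move=> /le_trans/(_ (ler_wpM2l (ltW lam_gt0) upper)).
rewrite /s; nra.
Qed.
End NonnegativeSymmetric.

Section AdjacencyMatrix.
Variables (n : nat) (e : rel 'I_n).

Lemma adjmx_ge0 i j : 0 <= adjmx e i j.
Proof. by rewrite mxE ler0n. Qed.

Lemma adjmx_sym : symmetric e -> (adjmx e)^T = adjmx e.
Proof. by move=> e_sym; apply/matrixP => i j; rewrite !mxE e_sym. Qed.

Lemma adjmx_row_sum i : \sum_j adjmx e i j = (deg e i)%:R.
Proof.
rewrite /deg -sum1_card natr_sum [RHS]big_mkcond /=.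
by apply: eq_bigr => j _; rewrite mxE unfold_in; case: (e i j).
Qed.

Variable lam : R.
Hypotheses (e_sym : symmetric e)
  (lam_max : forall mu, eigenvalue (adjmx e) mu -> mu <= lam).

Lemma adjmx_eigenvalue_bound_gt0 : (exists i j, e i j) -> 0 < lam.
Proof.
move=> [i [j eij]]; have := sum_entries_le (adjmx_sym e_sym) lam_max.
under eq_bigr do rewrite adjmx_row_sum.
have deg_gt0 : (0 < deg e i)%N by apply/card_gt0P; exists j.
have : (1 <= \sum_k deg e k)%N by rewrite (bigD1 i) //=; lia.
rewrite -(ler_nat R) natr_sum; have : 0 <= n%:R :> R by []; nra.
Qed.

Lemma sum_deg_sqr_le : 0 < lam -> \sum_i (deg e i ^ 2)%:R <= 16%:R * n%:R * lam ^+ 2.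
Proof.
move=> /(sum_row_sums_sqr_le (adjmx_sym e_sym) lam_max (@adjmx_ge0)).
by under eq_bigr do rewrite adjmx_row_sum -natrX.
Qed.

Lemma grundy_cube_le_eigenvalue :
  (exists i j, e i j) -> (grundy e)%:R ^+ 3 <= 560%:R * n%:R * lam ^+ 2.
Proof.
move=> edge; have [i [j eij]] := edge.
have S_le := sum_deg_sqr_le (adjmx_eigenvalue_bound_gt0 edge).
rewrite -natr_sum in S_le; set S := (\sum_v _)%N in S_le.
have deg_gt0 : (0 < deg e i)%N by apply/card_gt0P; exists j.
have : (grundy e ^ 3 <= 35 * S)%N.
  by have := grundy_cube_le e; rewrite /S (bigD1 i) //=; nia.
rewrite -(ler_nat R) natrX natrM => /le_trans; apply; nra.
Qed.
End AdjacencyMatrix.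

Lemma powR_invn_exprn (K : realType) (x : K) k :
  0 <= x -> (0 < k)%N -> (x `^ k%:R^-1) ^+ k = x.
Proof.
move=> x_ge0 k_gt0.
by rewrite -powR_mulrn ?powR_ge0 // -powRrM mulVf ?pnatr_eq0 -?lt0n // powRr1.
Qed.

Theorem corollary1 :
  exists C : R, 0 < C /\
    forall (n : nat) (e : rel 'I_n),
      simple_graph e -> (exists i j, e i j) ->
      forall lam : R, largest_eigenvalue (adjmx e) lam ->
        (grundy e)%:R <= C * lam * ((n%:R / lam) `^ (3%:R)^-1).
Proof.
exists 9%:R; split => // n e [e_sym _] edge lam [_ lam_max].
have lam_gt0 := adjmx_eigenvalue_bound_gt0 e_sym lam_max edge.
have cube_root : ((n%:R / lam) `^ (3%:R)^-1) ^+ 3 = n%:R / lam.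
  by apply: powR_invn_exprn => //; rewrite divr_ge0 // ltW.
rewrite -(@ler_pXn2r _ 3) ?nnegrE ?mulr_ge0 ?powR_ge0 //; last exact: ltW.
rewrite !exprMn cube_root.
apply: le_trans (grundy_cube_le_eigenvalue e_sym lam_max edge) _.
have -> : 9%:R ^+ 3 * lam ^+ 3 * (n%:R / lam) = 729%:R * n%:R * lam ^+ 2 :> R.
  by field; rewrite gt_eqF.
by rewrite ler_wpM2r ?sqr_ge0 // ler_wpM2r // ler_nat.
Qed.
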